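(* Let $D_K$ be a relative $K$-entropy satisfying Properties (a), (b), (c) and (d) below, and let $H_K$ be the associated conditional entropy, defined by one of the two forms below. Then (i) $H_K(A|B)=0$ for every state of the form $\rho_{AB}=|\psi\rangle\langle\psi|_A\otimes\rho_B$ with $|\psi\rangle$ a unit vector; and (ii) $H_K(A|B)\le\log d_A$ for every density operator $\rho_{AB}$, where $d_A=\dim\mathcal{H}_A$.
   Context: All Hilbert spaces are finite-dimensional; $\log$ has an arbitrary but fixed base. A relative $K$-entropy $D_K$ assigns to every pair $(S,T)$ of positive semidefinite operators on a common Hilbert space an extended real number $D_K(S\|T)$. Properties: (a) for every trace-preserving completely positive map $\mathcal{E}$ (possibly between different spaces), $D_K(\mathcal{E}(S)\|\mathcal{E}(T))\le D_K(S\|T)$; (b) for positive semidefinite $S,T$ on $\mathcal{H}$ and $T'$ on $\mathcal{H}'$, $D_K(S\oplus 0\,\|\,T\oplus T')=D_K(S\|T)$; (c) for every constant $c>0$, $D_K(S\|cT)=D_K(S\|T)+\log\frac1c$; (d) $D_K(\rho\|\rho)=0$ for every density operator $\rho$. The conditional $K$-entropy of a density operator $\rho_{AB}$ is either $H_K(A|B)=-D_K(\rho_{AB}\|\mathbb{1}_A\otimes\rho_B)$ for all $\rho_{AB}$, or $H_K(A|B)=\max_{\sigma_B}[-D_K(\rho_{AB}\|\mathbb{1}_A\otimes\sigma_B)]$ for all $\rho_{AB}$, maximum over density operators $\sigma_B$. *)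

From HB Require Import structures.
From mathcomp Require Import all_boot all_order all_algebra.
From mathcomp Require Import all_classical all_reals.
From mathcomp Require Import ereal exp.
From mathcomp Require Import complex mxtens.
Set Implicit Arguments. Unset Strict Implicit. Unset Printing Implicit Defensive.
Import Order.TTheory GRing.Theory Num.Theory.
Local Open Scope ring_scope.

Section QDefs.
Variable R : realType.
Local Notation C := R[i].

Definition adj (m n : nat) (A : 'M[C]_(m, n)) : 'M[C]_(n, m) :=
  (map_mx Num.conj A)^T.

Definition psd (n : nat) (A : 'M[C]_n) : Prop :=
  adj A = A /\ forall v : 'cV[C]_n, 0 <= (adj v *m A *m v) 0 0.

Definition density (n : nat) (rho : 'M[C]_n) : Prop := psd rho /\ \tr rho = 1.

(* partial trace over the first tensor factor (A) of C^dA (x) C^dB,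
   tensor indices encoded as in mxtens (Kronecker product [tensmx]) *)
Definition ptraceA (dA dB : nat) (X : 'M[C]_(dA * dB)) : 'M[C]_dB :=
  \matrix_(b, b') \sum_(a < dA) X (mxtens_index (a, b)) (mxtens_index (a, b')).

(* id_k (x) E, acting on 'M_(k * n) *)
Definition ampl (k n m : nat) (E : 'M[C]_n -> 'M[C]_m) (X : 'M[C]_(k * n))
  : 'M[C]_(k * m) :=
  \matrix_(i, j) E (\matrix_(a, b) X (mxtens_index ((mxtens_unindex i).1, a))
                                     (mxtens_index ((mxtens_unindex j).1, b)))
                   (mxtens_unindex i).2 (mxtens_unindex j).2.

Definition CPTP (n m : nat) (E : 'M[C]_n -> 'M[C]_m) : Prop :=
  [/\ (forall (c : C) (X Y : 'M[C]_n), E (c *: X + Y) = c *: E X + E Y),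
      (forall X : 'M[C]_n, \tr (E X) = \tr X) &
      (forall (k : nat) (X : 'M[C]_(k * n)), psd X -> psd (ampl E X))].

Definition logb (b x : R) : R := ln x / ln b.

Definition relent := forall n : nat, 'M[C]_n -> 'M[C]_n -> \bar R.

Definition is_rel_K_entropy (b : R) (D : relent) : Prop :=
  [/\
      (forall (n m : nat) (E : 'M[C]_n -> 'M[C]_m) (S T : 'M[C]_n),
          CPTP E -> psd S -> psd T -> (D m (E S) (E T) <= D n S T)%E),
      (forall (n m : nat) (S T : 'M[C]_n) (T' : 'M[C]_m),
          psd S -> psd T -> psd T' ->
          D (n + m)%N (block_mx S 0 0 0) (block_mx T 0 0 T') = D n S T),
      (forall (n : nat) (S T : 'M[C]_n) (c : R), psd S -> psd T -> 0 < c ->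
          D n S (real_complex R c *: T) = (D n S T + (logb b (1 / c))%:E)%E) &
      (forall (n : nat) (rho : 'M[C]_n), density rho -> D n rho rho = 0%E)].

(* conditional K-entropy; [second = false]: first form, [true]: second form *)
Definition Hcond (second : bool) (D : relent) (dA dB : nat)
  (rho : 'M[C]_(dA * dB)) : \bar R :=
  if second then
    ereal_sup [set (- D (dA * dB)%N rho (1%:M *t sigma))%E
              | sigma in [set sigma : 'M[C]_dB | density sigma]]
  else (- D (dA * dB)%N rho (1%:M *t ptraceA rho))%E.

End QDefs.

From HB Require Import structures.
From mathcomp Require Import all_boot all_order all_algebra.
From mathcomp Require Import all_classical all_reals.
From mathcomp Require Import ereal exp.
From mathcomp Require Import complex mxtens.
Import Order.TTheory GRing.Theory Num.Theory.
Local Open Scope ring_scope.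
Set Implicit Arguments. Unset Strict Implicit. Unset Printing Implicit Defensive.

(** Each bound is data processing (a) for a suitable channel, after which
    (b)-(d) evaluate the relative entropy of the images.  The trace channel
    sends [rho] and [1 (x) sigma] to [1] and [dA], so by (c) and (d)
    [D(rho || 1 (x) sigma) >= - log dA], which gives (ii).  For (i) let
    [P = psi psi^*].  The measurement [{P (x) 1, 1 - P (x) 1}] sends
    [P (x) rhoB] and [1 (x) sigma] to [1 (+) 0] and [1 (+) c], so by (b) and (d)
    [D(P (x) rhoB || 1 (x) sigma) >= 0].  Conversely, the channel preparing
    [P (x) X] from the block [X] and [(1 - P) (x) Y / (dA - 1)] from the block
    [Y] sends [rhoB (+) 0] and [rhoB (+) (dA - 1) rhoB] to [P (x) rhoB] and
    [1 (x) rhoB], so [D(P (x) rhoB || 1 (x) rhoB) <= D(rhoB || rhoB) = 0]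
    (for [dA = 1], [P (x) rhoB = 1 (x) rhoB] outright).  All channels are
    given by Kraus operators. *)

Section QuantumOperations.
Variable R : realType.
Local Notation C := R[i].
Local Notation idx := (@mxtens_index _ _).

(** * Adjoints and positive semidefinite matrices *)

Lemma adjE m n (A : 'M[C]_(m, n)) i j : adj A i j = (A j i)^*.
Proof. by rewrite !mxE. Qed.

Lemma adjK m n (A : 'M[C]_(m, n)) : adj (adj A) = A.
Proof. by apply/matrixP=> i j; rewrite !adjE conjCK. Qed.

Lemma adj_mul m n p (A : 'M[C]_(m, n)) (B : 'M[C]_(n, p)) :
  adj (A *m B) = adj B *m adj A.
Proof.
apply/matrixP=> i j; rewrite adjE !mxE rmorph_sum; apply: eq_bigr=> k _.
by rewrite !adjE rmorphM mulrC.
Qed.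

Lemma adjD m n (A B : 'M[C]_(m, n)) : adj (A + B) = adj A + adj B.
Proof. by apply/matrixP=> i j; rewrite !mxE rmorphD. Qed.

Lemma adjN m n (A : 'M[C]_(m, n)) : adj (- A) = - adj A.
Proof. by apply/matrixP=> i j; rewrite !mxE rmorphN. Qed.

Lemma adj0 m n : adj (0 : 'M[C]_(m, n)) = 0.
Proof. by apply/matrixP=> i j; rewrite !mxE rmorph0. Qed.

Lemma adjZ m n c (A : 'M[C]_(m, n)) : adj (c *: A) = c^* *: adj A.
Proof. by apply/matrixP=> i j; rewrite !mxE rmorphM. Qed.

Lemma adj1 n : adj (1%:M : 'M[C]_n) = 1%:M.
Proof.
apply/matrixP=> i j; rewrite !mxE eq_sym.
by case: (i == j); rewrite ?rmorph1 ?rmorph0.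
Qed.

Lemma adj_delta m n (i : 'I_m) (j : 'I_n) :
  adj (delta_mx i j : 'M[C]_(m, n)) = delta_mx j i.
Proof. by rewrite /adj map_delta_mx trmx_delta. Qed.

Lemma adj_col m1 m2 n (A : 'M[C]_(m1, n)) (B : 'M[C]_(m2, n)) :
  adj (col_mx A B) = row_mx (adj A) (adj B).
Proof. by rewrite /adj map_col_mx tr_col_mx. Qed.

Lemma adj_row m n1 n2 (A : 'M[C]_(m, n1)) (B : 'M[C]_(m, n2)) :
  adj (row_mx A B) = col_mx (adj A) (adj B).
Proof. by rewrite /adj map_row_mx tr_row_mx. Qed.

Lemma adj_tens m n p q (A : 'M[C]_(m, n)) (B : 'M[C]_(p, q)) :
  adj (A *t B) = adj A *t adj B.
Proof. by rewrite /adj map_mxT trmx_tens. Qed.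

Lemma adj_mulmx_ge0 n (v : 'cV[C]_n) : 0 <= (adj v *m v) 0 0.
Proof.
rewrite !mxE; apply: sumr_ge0=> i _; rewrite !mxE mulrC; exact: mul_conjC_ge0.
Qed.

Lemma psd0 n : psd (0 : 'M[C]_n).
Proof. by split=> [|v]; rewrite ?adj0 // mulmx0 mul0mx mxE. Qed.

Lemma psdD n (A B : 'M[C]_n) : psd A -> psd B -> psd (A + B).
Proof.
move=> [hA pA] [hB pB]; split=> [|v]; first by rewrite adjD hA hB.
by rewrite mulmxDr mulmxDl mxE addr_ge0.
Qed.

Lemma psd_sum (I : finType) n (F : I -> 'M[C]_n) :
  (forall i, psd (F i)) -> psd (\sum_i F i).
Proof. by move=> h; apply: (big_ind (@psd R n)); [apply: psd0|apply: psdD|]. Qed.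

Lemma psdZ n (c : C) (A : 'M[C]_n) : 0 <= c -> psd A -> psd (c *: A).
Proof.
move=> hc [hA pA]; split=> [|v]; first by rewrite adjZ hA geC0_conj.
by rewrite -scalemxAr -scalemxAl mxE mulr_ge0.
Qed.

Lemma psd_congr m n (M : 'M[C]_(m, n)) (X : 'M[C]_n) :
  psd X -> psd (M *m X *m adj M).
Proof.
move=> [hX pX]; split=> [|v]; first by rewrite !adj_mul adjK hX mulmxA.
by have := pX (adj M *m v); rewrite adj_mul adjK !mulmxA.
Qed.

Lemma psd1 n : psd (1%:M : 'M[C]_n).
Proof. by split=> [|v]; rewrite ?adj1 // mulmx1 adj_mulmx_ge0. Qed.

Lemma psd_scalar n (c : C) : 0 <= c -> psd (c%:M : 'M_n).
Proof. by move=> hc; rewrite -scalemx1; apply: psdZ => //; apply: psd1. Qed.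

Lemma psd_diag_ge0 n (X : 'M[C]_n) i : psd X -> 0 <= X i i.
Proof. by case=> _ /(_ (delta_mx i 0)); rewrite adj_delta -rowE -colE !mxE. Qed.

Lemma psd_mxtrace_ge0 n (X : 'M[C]_n) : psd X -> 0 <= \tr X.
Proof. by move=> h; apply: sumr_ge0 => i _; apply: psd_diag_ge0. Qed.

Lemma psd_block m1 m2 (X : 'M[C]_m1) (Y : 'M[C]_m2) :
  psd X -> psd Y -> psd (block_mx X 0 0 Y).
Proof.
move=> hX hY.
have -> : block_mx X 0 0 Y = col_mx 1%:M 0 *m X *m adj (col_mx 1%:M 0)
                         + col_mx 0 1%:M *m Y *m adj (col_mx 0 1%:M).
  rewrite !adj_col !adj0 !adj1 !mul_col_mx !mul1mx !mul0mx !mul_mx_row.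
  by rewrite !mulmx1 !mulmx0 /block_mx add_col_mx !addr0 !add0r.
by apply: psdD; apply: psd_congr.
Qed.

Lemma density1 : density (1%:M : 'M[C]_1).
Proof. by split; [exact: psd1 | rewrite mxtrace1]. Qed.

Lemma density_dim_gt0 n m (rho : 'M[C]_(n * m)) : density rho -> (0 < n)%N.
Proof.
by case: n rho => // rho [_]; rewrite /mxtrace big_ord0 => /eqP; rewrite eq_sym oner_eq0.
Qed.

(** * Tensor products *)

Lemma sum_mxtens_index k n (F : 'I_(k * n) -> C) :
  \sum_Q F Q = \sum_(a < k) \sum_(b < n) F (idx (a, b)).
Proof.
rewrite pair_big /= (reindex (@mxtens_index k n)) /=; last first.
  by exists (@mxtens_unindex k n) => x _; rewrite (mxtens_indexK, mxtens_unindexK).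
by apply: eq_bigr => -[].
Qed.

Lemma mxtrace_tens m n (A : 'M[C]_m) (B : 'M[C]_n) : \tr (A *t B) = \tr A * \tr B.
Proof.
rewrite /mxtrace sum_mxtens_index big_distrl /=; apply: eq_bigr => a _.
by rewrite big_distrr /=; apply: eq_bigr => b _; rewrite tensmxE.
Qed.

Lemma tensmxDl m n p q (A B : 'M[C]_(m, n)) (Y : 'M[C]_(p, q)) :
  (A + B) *t Y = A *t Y + B *t Y.
Proof. by apply/matrixP => i j; rewrite !mxE mulrDl. Qed.

Lemma tensmxZl m n p q c (A : 'M[C]_(m, n)) (Y : 'M[C]_(p, q)) :
  (c *: A) *t Y = c *: (A *t Y).
Proof. by apply/matrixP => i j; rewrite !mxE mulrA. Qed.

Lemma tensmxZr m n p q c (A : 'M[C]_(m, n)) (Y : 'M[C]_(p, q)) :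
  A *t (c *: Y) = c *: (A *t Y).
Proof. by apply/matrixP => i j; rewrite !mxE mulrCA. Qed.

Lemma tensmx_suml (I : finType) m n p q (A : I -> 'M[C]_(m, n)) (Y : 'M[C]_(p, q)) :
  (\sum_i A i) *t Y = \sum_i (A i *t Y).
Proof.
apply/matrixP => i j; rewrite !mxE !summxE big_distrl /=.
by apply: eq_bigr => k _; rewrite !mxE.
Qed.

Definition mxtens_block k n (X : 'M[C]_(k * n)) (i j : 'I_k) : 'M[C]_n :=
  \matrix_(a, b) X (idx (i, a)) (idx (j, b)).

Lemma tens1mx_congrE k m n (K : 'M[C]_(m, n)) (X : 'M[C]_(k * n)) i1 i2 j1 j2 :
  ((1%:M *t K) *m X *m adj (1%:M *t K)) (idx (i1, i2)) (idx (j1, j2))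
  = (K *m mxtens_block X i1 j1 *m adj K) i2 j2.
Proof.
rewrite mxE sum_mxtens_index mxE (bigD1 j1) //= [X in _ + X]big1 ?addr0; last first.
  move=> a ha; apply: big1 => c _.
  by rewrite adjE tensmxE !mxE eq_sym (negbTE ha) mulr0n mul0r rmorph0 mulr0.
apply: eq_bigr => b _.
rewrite !adjE tensmxE !mxE eqxx mulr1n mul1r; congr (_ * _).
rewrite sum_mxtens_index (bigD1 i1) //= [X in _ + X]big1 ?addr0; last first.
  move=> a ha; apply: big1 => c _.
  by rewrite tensmxE !mxE eq_sym (negbTE ha) mulr0n !mul0r.
by apply: eq_bigr => c _; rewrite tensmxE !mxE eqxx mulr1n mul1r.
Qed.

(** * Kraus maps *)

Definition kraus (I : finType) m n (w : I -> C) (K : I -> 'M[C]_(m, n))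
  (X : 'M[C]_n) : 'M[C]_m := \sum_i w i *: (K i *m X *m adj (K i)).

Section KrausFamily.
Variables (I : finType) (w : I -> C).

Lemma kraus_linear m n (K : I -> 'M[C]_(m, n)) c X Y :
  kraus w K (c *: X + Y) = c *: kraus w K X + kraus w K Y.
Proof.
rewrite /kraus scaler_sumr -big_split /=; apply: eq_bigr => i _.
by rewrite mulmxDr mulmxDl -!scalemxAr -!scalemxAl scalerDr !scalerA mulrC.
Qed.

Lemma mxtrace_kraus m n (K : I -> 'M[C]_(m, n)) X :
  \sum_i w i *: (adj (K i) *m K i) = 1%:M -> \tr (kraus w K X) = \tr X.
Proof.
move=> K_complete; rewrite -[X in RHS]mul1mx -K_complete mulmx_suml !raddf_sum /=.
by apply: eq_bigr => i _; rewrite -scalemxAl !mxtraceZ mxtrace_mulC !mulmxA.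
Qed.

Lemma ampl_kraus k m n (K : I -> 'M[C]_(m, n)) (X : 'M[C]_(k * n)) :
  ampl (kraus w K) X = kraus w (fun i => (1%:M : 'M_k) *t K i) X.
Proof.
apply/matrixP => i j.
case: (mxtens_indexP i) => i1 i2; case: (mxtens_indexP j) => j1 j2.
rewrite mxE !mxtens_indexK /kraus !summxE; apply: eq_bigr => l _.
by rewrite [in RHS]mxE tens1mx_congrE mxE.
Qed.

Hypothesis w_ge0 : forall i, 0 <= w i.

Lemma kraus_psd m n (K : I -> 'M[C]_(m, n)) X : psd X -> psd (kraus w K X).
Proof. by move=> hX; apply: psd_sum => i; apply: psdZ => //; apply: psd_congr. Qed.

Lemma CPTP_kraus m n (K : I -> 'M[C]_(m, n)) :
  \sum_i w i *: (adj (K i) *m K i) = 1%:M -> CPTP (kraus w K).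
Proof.
move=> K_complete; split=> [c X Y|X|k X hX]; [exact: kraus_linear | exact: mxtrace_kraus |].
by rewrite ampl_kraus; apply: kraus_psd.
Qed.

End KrausFamily.

Lemma kraus_mulmxr (I : finType) m n p (w : I -> C) (K : I -> 'M[C]_(m, n))
  (M : 'M[C]_(n, p)) X :
  kraus w (fun i => K i *m M) X = kraus w K (M *m X *m adj M).
Proof. by apply: eq_bigr => i _; rewrite adj_mul !mulmxA. Qed.

Definition trace_op n (i : 'I_n) : 'rV[C]_n := delta_mx 0 i.

Lemma trace_op_complete n :
  \sum_i adj (@trace_op n i) *m trace_op i = 1%:M.
Proof.
by rewrite mx1_sum_delta; apply: eq_bigr => i _; rewrite adj_delta mul_delta_mx.
Qed.

Lemma kraus_traceE n (X : 'M[C]_n) : kraus (fun=> 1) (@trace_op n) X = (\tr X)%:M.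
Proof.
apply/matrixP => a b; rewrite [a]ord1 [b]ord1 summxE !mxE; apply: eq_bigr => i _.
by rewrite scale1r adj_delta -rowE -colE !mxE.
Qed.

Lemma CPTP_trace n : CPTP (kraus (fun=> 1) (@trace_op n)).
Proof.
apply: CPTP_kraus => [_|]; first exact: ler01.
by under eq_bigr do rewrite scale1r; apply: trace_op_complete.
Qed.

Lemma sum_eq_natr n (i : 'I_n) (F : 'I_n -> C) : \sum_a F a * (a == i)%:R = F i.
Proof.
rewrite (bigD1 i) //= eqxx mulr1 big1 ?addr0 // => a /negbTE ->.
by rewrite mulr0.
Qed.

(* This is [v *t 1%:M] retyped: the latter lives in ['M_(n * m, 1 * m)], and
   [1 * m] does not reduce to [m]. *)
Definition vtens n m (v : 'cV[C]_n) : 'M[C]_(n * m, m) :=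
  \matrix_(p, b) (v (mxtens_unindex p).1 0 * ((mxtens_unindex p).2 == b)%:R).

Lemma vtensE n m (v : 'cV[C]_n) i a b : vtens m v (idx (i, a)) b = v i 0 * (a == b)%:R.
Proof. by rewrite mxE mxtens_indexK. Qed.

Lemma mulmx_vtens p n m (X : 'M[C]_(p, n * m)) (v : 'cV[C]_n) j b :
  (X *m vtens m v) j b = \sum_i X j (idx (i, b)) * v i 0.
Proof.
rewrite mxE sum_mxtens_index; apply: eq_bigr => i _.
by under eq_bigr do rewrite vtensE mulrA; rewrite sum_eq_natr.
Qed.

Lemma vtens_mulmx n m (v : 'cV[C]_n) (Y : 'M[C]_m) i a b :
  (vtens m v *m Y) (idx (i, a)) b = v i 0 * Y a b.
Proof.
rewrite mxE (bigD1 a) //= vtensE eqxx mulr1 big1 ?addr0 // => c.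
by rewrite vtensE eq_sym => /negbTE ->; rewrite mulr0 mul0r.
Qed.

Lemma vtens_congr n m (v : 'cV[C]_n) (Y : 'M[C]_m) :
  vtens m v *m Y *m adj (vtens m v) = (v *m adj v) *t Y.
Proof.
apply/matrixP => i j.
case: (mxtens_indexP i) => i1 i2; case: (mxtens_indexP j) => j1 j2.
rewrite tensmxE mxE.
under eq_bigr do rewrite vtens_mulmx adjE vtensE rmorphM rmorph_nat eq_sym mulrA.
by rewrite sum_eq_natr mxE big_ord1 adjE mulrAC.
Qed.

Lemma adj_vtens_mulmx n m (v : 'cV[C]_n) :
  adj (vtens m v) *m vtens m v = (adj v *m v) 0 0 *: 1%:M.
Proof.
apply/matrixP => a b; rewrite mulmx_vtens.
under eq_bigr do rewrite adjE vtensE rmorphM rmorph_nat mulrAC.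
rewrite -mulr_suml !mxE eq_sym; congr (_ * _).
by apply: eq_bigr => i _; rewrite adjE.
Qed.

Lemma kraus_vtens (I : finType) n m (w : I -> C) (u : I -> 'cV[C]_n) (Y : 'M[C]_m) :
  kraus w (fun i => vtens m (u i)) Y = (\sum_i w i *: (u i *m adj (u i))) *t Y.
Proof.
rewrite tensmx_suml; apply: eq_bigr => i _.
by rewrite vtens_congr tensmxZl.
Qed.

Lemma vtens_complete (I : finType) n m (w : I -> C) (u : I -> 'cV[C]_n) :
  \sum_i w i *: (adj (vtens m (u i)) *m vtens m (u i))
  = (\sum_i w i * (adj (u i) *m u i) 0 0) *: 1%:M.
Proof.
by rewrite scaler_suml; apply: eq_bigr => i _; rewrite adj_vtens_mulmx scalerA.
Qed.

Lemma mulmx_vtens_delta p n m (X : 'M[C]_(p, n * m)) (a : 'I_n) j b :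
  (X *m vtens m (delta_mx a 0)) j b = X j (idx (a, b)).
Proof.
rewrite mulmx_vtens; under eq_bigr do rewrite mxE eqxx andbT.
by rewrite sum_eq_natr.
Qed.

Lemma adj_vtens_delta_mulmx p n m (X : 'M[C]_(n * m, p)) (a : 'I_n) b q :
  (adj (vtens m (delta_mx a 0)) *m X) b q = X (idx (a, b)) q.
Proof. by rewrite -[X in LHS]adjK -adj_mul adjE mulmx_vtens_delta adjE conjCK. Qed.

Lemma ptraceA_kraus n m (X : 'M[C]_(n * m)) :
  ptraceA X = kraus (fun=> 1) (fun a : 'I_n => adj (vtens m (delta_mx a 0))) X.
Proof.
apply/matrixP => b b'; rewrite summxE !mxE; apply: eq_bigr => a _.
by rewrite scale1r adjK mulmx_vtens_delta adj_vtens_delta_mulmx.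
Qed.

Lemma ptraceA_psd n m (X : 'M[C]_(n * m)) : psd X -> psd (ptraceA X).
Proof. by move=> hX; rewrite ptraceA_kraus; apply: kraus_psd => // _; apply: ler01. Qed.

Lemma mxtrace_ptraceA n m (X : 'M[C]_(n * m)) : \tr (ptraceA X) = \tr X.
Proof.
rewrite /mxtrace [RHS]sum_mxtens_index exchange_big /=.
by apply: eq_bigr => b _; rewrite !mxE.
Qed.

Lemma ptraceA_tens n m (A : 'M[C]_n) (Y : 'M[C]_m) : ptraceA (A *t Y) = \tr A *: Y.
Proof.
apply/matrixP => b b'; rewrite !mxE /mxtrace big_distrl /=.
by apply: eq_bigr => a _; rewrite tensmxE.
Qed.

Lemma psd_tens_proj n m (v : 'cV[C]_n) (Y : 'M[C]_m) :
  psd Y -> psd ((v *m adj v) *t Y).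
Proof. by move=> hY; rewrite -vtens_congr; apply: psd_congr. Qed.

Lemma psd_tens1mx n m (Y : 'M[C]_m) : psd Y -> psd ((1%:M : 'M[C]_n) *t Y).
Proof.
move=> hY; rewrite mx1_sum_delta tensmx_suml; apply: psd_sum => a.
by rewrite -(mul_delta_mx (0 : 'I_1)) -[delta_mx 0 a]adj_delta; apply: psd_tens_proj.
Qed.

Lemma block_mx0 m1 m2 n1 n2 :
  block_mx (0 : 'M[C]_(m1, n1)) (0 : 'M_(m1, n2)) (0 : 'M_(m2, n1)) (0 : 'M_(m2, n2)) = 0.
Proof. by rewrite /block_mx !row_mx0 col_mx0. Qed.

Lemma sum_block_mx_ul (I : finType) m1 m2 (F : I -> 'M[C]_m1) :
  \sum_i block_mx (F i) 0 0 (0 : 'M_m2) = block_mx (\sum_i F i) 0 0 0.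
Proof.
symmetry; apply: (big_morph (fun M => block_mx M 0 0 (0 : 'M[C]_m2))) => [x y|].
  by rewrite add_block_mx !addr0.
exact: block_mx0.
Qed.

Lemma sum_block_mx_dr (I : finType) m1 m2 (F : I -> 'M[C]_m2) :
  \sum_i block_mx (0 : 'M_m1) 0 0 (F i) = block_mx 0 0 0 (\sum_i F i).
Proof.
symmetry; apply: (big_morph (fun M => block_mx (0 : 'M[C]_m1) 0 0 M)) => [x y|].
  by rewrite add_block_mx !addr0.
exact: block_mx0.
Qed.

Section DirectSum.
Variables (I J : finType) (w1 : I -> C) (w2 : J -> C).

Definition sum_weight (s : I + J) : C :=
  match s with inl i => w1 i | inr j => w2 j end.

Section Outputs.
Variables (m1 m2 n : nat) (K1 : I -> 'M[C]_(m1, n)) (K2 : J -> 'M[C]_(m2, n)).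

Definition col_ops (s : I + J) : 'M[C]_(m1 + m2, n) :=
  match s with inl i => col_mx (K1 i) 0 | inr j => col_mx 0 (K2 j) end.

Lemma kraus_col_ops X :
  kraus sum_weight col_ops X = block_mx (kraus w1 K1 X) 0 0 (kraus w2 K2 X).
Proof.
have congr_col m m' (A : 'M[C]_(m, n)) (B : 'M[C]_(m', n)) :
    col_mx A B *m X *m adj (col_mx A B)
    = block_mx (A *m X *m adj A) (A *m X *m adj B) (B *m X *m adj A) (B *m X *m adj B).
  by rewrite adj_col mul_col_mx mul_col_row.
rewrite /kraus big_sumType /=.
under eq_bigr do rewrite congr_col adj0 !mulmx0 !mul0mx scale_block_mx !scaler0.
under [X in _ + X]eq_bigr do rewrite congr_col adj0 !mulmx0 !mul0mx scale_block_mx !scaler0.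
by rewrite sum_block_mx_ul sum_block_mx_dr add_block_mx !addr0 !add0r.
Qed.

Lemma col_ops_complete :
  \sum_s sum_weight s *: (adj (col_ops s) *m col_ops s)
  = \sum_i w1 i *: (adj (K1 i) *m K1 i) + \sum_j w2 j *: (adj (K2 j) *m K2 j).
Proof.
rewrite big_sumType /=; congr (_ + _); apply: eq_bigr => i _;
by rewrite adj_col adj0 mul_row_col mul0mx ?addr0 ?add0r.
Qed.

End Outputs.

Section Inputs.
Variables (m n1 n2 : nat) (K1 : I -> 'M[C]_(m, n1)) (K2 : J -> 'M[C]_(m, n2)).

Definition row_ops (s : I + J) : 'M[C]_(m, n1 + n2) :=
  match s with inl i => row_mx (K1 i) 0 | inr j => row_mx 0 (K2 j) end.

Lemma kraus_row_ops X11 X12 X21 X22 :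
  kraus sum_weight row_ops (block_mx X11 X12 X21 X22)
  = kraus w1 K1 X11 + kraus w2 K2 X22.
Proof.
rewrite /kraus big_sumType /=; congr (_ + _); apply: eq_bigr => i _;
by rewrite adj_row adj0 mul_row_block mul_row_col !mul0mx !mulmx0 ?addr0 ?add0r.
Qed.

Lemma row_ops_complete :
  \sum_s sum_weight s *: (adj (row_ops s) *m row_ops s)
  = block_mx (\sum_i w1 i *: (adj (K1 i) *m K1 i)) 0 0
             (\sum_j w2 j *: (adj (K2 j) *m K2 j)).
Proof.
have congr_row p p' (A : 'M[C]_(m, p)) (B : 'M[C]_(m, p')) :
    adj (row_mx A B) *m row_mx A B
    = block_mx (adj A *m A) (adj A *m B) (adj B *m A) (adj B *m B).
  by rewrite adj_row mul_col_row.
rewrite big_sumType /=.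
under eq_bigr do rewrite congr_row adj0 !mulmx0 !mul0mx scale_block_mx !scaler0.
under [X in _ + X]eq_bigr do rewrite congr_row adj0 !mulmx0 !mul0mx scale_block_mx !scaler0.
by rewrite sum_block_mx_ul sum_block_mx_dr add_block_mx !addr0 !add0r.
Qed.

End Inputs.

End DirectSum.

Definition measure_proj n (Q : 'M[C]_n) :=
  kraus (sum_weight (fun=> 1 : C) (fun=> 1 : C))
        (col_ops (fun i => trace_op i *m Q) (fun i => trace_op i *m (1%:M - Q))).

Lemma measure_projE n (Q : 'M[C]_n) X :
  measure_proj Q X = block_mx (\tr (Q *m X *m adj Q))%:M 0 0
                              (\tr ((1%:M - Q) *m X *m adj (1%:M - Q)))%:M.
Proof. by rewrite /measure_proj kraus_col_ops !kraus_mulmxr !kraus_traceE. Qed.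

Lemma CPTP_measure_proj n (Q : 'M[C]_n) :
  adj Q = Q -> Q *m Q = Q -> CPTP (measure_proj Q).
Proof.
move=> hQ QQ; apply: CPTP_kraus; first by case=> ? /=; apply: ler01.
have complete_mulmx (M : 'M[C]_n) :
    \sum_i (fun=> 1 : C) i *: (adj (trace_op i *m M) *m (trace_op i *m M)) = adj M *m M.
  under eq_bigr do rewrite scale1r adj_mul !mulmxA -(mulmxA (adj M)).
  by rewrite -mulmx_suml -mulmx_sumr trace_op_complete mulmx1.
rewrite col_ops_complete !complete_mulmx adjD adjN adj1 hQ QQ.
by rewrite mulmxBl !mulmxBr !mul1mx mulmx1 QQ subrr subr0 addrC subrK.
Qed.

(** * Projection onto a unit vector and its complement *)

Lemma unit_vector_dim_gt0 n (psi : 'cV[C]_n) : adj psi *m psi = 1 -> (0 < n)%N.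
Proof.
case: n psi => // psi /(congr1 (fun M : 'M[C]_1 => M 0 0)).
by rewrite !mxE big_ord0 => /eqP; rewrite eq_sym oner_eq0.
Qed.

Lemma unit_proj_dim1 (psi : 'cV[C]_1) : adj psi *m psi = 1 -> psi *m adj psi = 1%:M.
Proof.
move=> /(congr1 (fun M : 'M[C]_1 => M 0 0)); rewrite !mxE !big_ord1 => psi_norm.
by apply/matrixP => a c; rewrite [a]ord1 [c]ord1 !mxE big_ord1 -psi_norm mulrC.
Qed.

Section UnitVector.
Variables (n : nat) (psi : 'cV[C]_n).
Hypothesis psi_unit : adj psi *m psi = 1.
Local Notation P := (psi *m adj psi).
Local Notation Pc := (1%:M - psi *m adj psi).

Lemma adj_proj : adj P = P.
Proof. by rewrite adj_mul adjK. Qed.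

Lemma proj_idem : P *m P = P.
Proof. by rewrite -mulmxA (mulmxA (adj psi)) psi_unit mul1mx. Qed.

Lemma adj_proj_compl : adj Pc = Pc.
Proof. by rewrite adjD adjN adj1 adj_proj. Qed.

Lemma proj_compl_idem : Pc *m Pc = Pc.
Proof. by rewrite mulmxBl !mulmxBr !mul1mx mulmx1 proj_idem subrr subr0. Qed.

Lemma mxtrace_proj : \tr P = 1.
Proof. by rewrite mxtrace_mulC psi_unit mxtrace1. Qed.

Lemma mxtrace_proj_compl : \tr Pc = n.-1%:R.
Proof.
rewrite linearB /= mxtrace1 mxtrace_proj.
by rewrite -(prednK (unit_vector_dim_gt0 psi_unit)) -natr1 addrK.
Qed.

Local Notation e a := (delta_mx a 0 : 'cV[C]_n).

Lemma sum_proj_compl_delta : \sum_a (Pc *m e a) *m adj (Pc *m e a) = Pc.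
Proof.
under eq_bigr do rewrite adj_mul adj_proj_compl !mulmxA -(mulmxA _ _ (adj _)) adj_delta.
by rewrite -mulmx_suml -mulmx_sumr; under eq_bigr do rewrite mul_delta_mx;
  rewrite -mx1_sum_delta mulmx1 proj_compl_idem.
Qed.

Lemma sum_proj_compl_delta_norm :
  \sum_a (adj (Pc *m e a) *m (Pc *m e a)) 0 0 = n.-1%:R.
Proof.
rewrite -mxtrace_proj_compl; apply: eq_bigr => a _.
rewrite adj_mul adj_proj_compl -mulmxA (mulmxA Pc) proj_compl_idem adj_delta.
by rewrite mulmxA -rowE -colE !mxE.
Qed.

Variable m : nat.
Hypothesis n_gt1 : (1 < n)%N.
Local Notation c := (n.-1%:R : C)^-1.

Lemma predn_natr_neq0 : n.-1%:R != 0 :> C.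
Proof. by rewrite pnatr_eq0 -lt0n ltn_predRL. Qed.

Definition prepare : 'M[C]_(m + m) -> 'M[C]_(n * m) :=
  kraus (sum_weight (fun=> 1 : C) (fun=> c))
        (row_ops (fun _ : 'I_1 => vtens m psi) (fun a => vtens m (Pc *m e a))).

Lemma prepareE X Y : prepare (block_mx X 0 0 Y) = P *t X + Pc *t (c *: Y).
Proof.
rewrite /prepare kraus_row_ops !kraus_vtens big_ord1 scale1r.
by rewrite -scaler_sumr sum_proj_compl_delta tensmxZl tensmxZr.
Qed.

Lemma CPTP_prepare : CPTP prepare.
Proof.
apply: CPTP_kraus; first by case=> ? /=; rewrite ?invr_ge0 ?ler0n ?ler01.
rewrite row_ops_complete !vtens_complete big_ord1 mul1r psi_unit mxE scale1r.
rewrite -mulr_sumr sum_proj_compl_delta_norm mulVf ?predn_natr_neq0 //.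
by rewrite scale1r -scalar_mx_block.
Qed.

End UnitVector.

(** * Bounds on the relative entropy *)

Section RelativeEntropy.
Variables (b : R) (D : relent R).
Hypothesis hD : is_rel_K_entropy b D.

Lemma relK_ge0_proj N (Q S T : 'M[C]_N) :
  adj Q = Q -> Q *m Q = Q -> psd S -> psd T ->
  \tr (Q *m S *m adj Q) = 1 -> (1%:M - Q) *m S = 0 -> \tr (Q *m T *m adj Q) = 1 ->
  (0 <= D S T)%E.
Proof.
move=> hQ QQ hS hT trS S_Q trT; have [dpi dsum _ refl] := hD.
have := dpi _ _ _ S T (CPTP_measure_proj hQ QQ) hS hT.
rewrite !measure_projE trS S_Q trT mul0mx mxtrace0 raddf0 dsum ?refl //.
- exact: density1.
- exact: psd1.
- exact: psd1.
- by apply/psd_scalar/psd_mxtrace_ge0/psd_congr.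
Qed.

Lemma relK_proj_tens_le0 n m (psi : 'cV[C]_n) (rho : 'M[C]_m) :
  adj psi *m psi = 1 -> (1 < n)%N -> density rho ->
  (D ((psi *m adj psi) *t rho) (1%:M *t rho) <= 0)%E.
Proof.
move=> psi_unit n_gt1 [rho_psd rho_tr]; have [dpi dsum _ refl] := hD.
have rho'_psd : psd (n.-1%:R *: rho) by apply: psdZ; rewrite ?ler0n.
have := dpi _ _ _ _ _ (CPTP_prepare psi_unit m n_gt1)
  (psd_block rho_psd (psd0 m)) (psd_block rho_psd rho'_psd).
rewrite !(prepareE psi_unit) scaler0 tensmx0 addr0 scalerA mulVf ?predn_natr_neq0 //.
by rewrite scale1r -tensmxDl addrC subrK dsum ?refl.
Qed.

Lemma relK_proj_tens_ge0 n m (psi : 'cV[C]_n) (rho sigma : 'M[C]_m) :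
  adj psi *m psi = 1 -> density rho -> density sigma ->
  (0 <= D ((psi *m adj psi) *t rho) (1%:M *t sigma))%E.
Proof.
move=> psi_unit [rho_psd rho_tr] [sigma_psd sigma_tr].
set Q := (psi *m adj psi) *t (1%:M : 'M_m).
have adjQ : adj Q = Q by rewrite adj_tens adj_proj adj1.
have Q_congr A Y : Q *m (A *t Y) *m adj Q = (psi *m adj psi *m A *m (psi *m adj psi)) *t Y.
  by rewrite adjQ !tensmx_mul mul1mx mulmx1.
apply: (relK_ge0_proj adjQ); rewrite ?Q_congr ?mxtrace_tens.
- by rewrite tensmx_mul proj_idem // mulmx1.
- exact: psd_tens_proj.
- exact: psd_tens1mx.
- by rewrite !proj_idem // mxtrace_proj // rho_tr mulr1.
- by rewrite mulmxBl mul1mx tensmx_mul proj_idem // mul1mx subrr.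
- by rewrite mulmx1 proj_idem // mxtrace_proj // sigma_tr mulr1.
Qed.

Lemma relK_proj_tens_eq0 n m (psi : 'cV[C]_n) (rho : 'M[C]_m) :
  adj psi *m psi = 1 -> density rho ->
  D ((psi *m adj psi) *t rho) (1%:M *t rho) = 0%E.
Proof.
move=> psi_unit rho_dens; apply/eqP; rewrite eq_le relK_proj_tens_ge0 // andbT.
case: n psi psi_unit => [|[|n]] psi psi_unit.
- by have := unit_vector_dim_gt0 psi_unit.
- have [_ _ _ refl] := hD; case: rho_dens => rho_psd rho_tr.
  rewrite unit_proj_dim1 // refl //; split; first exact: psd_tens1mx.
  by rewrite mxtrace_tens mxtrace1 rho_tr mulr1.
- exact: relK_proj_tens_le0.
Qed.

Lemma relK_ge_log_trace N (rho T : 'M[C]_N) (t : R) :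
  density rho -> psd T -> \tr T = real_complex R t -> 0 < t ->
  ((- logb b t)%:E <= D rho T)%E.
Proof.
move=> [rho_psd rho_tr] T_psd T_tr t_gt0; have [dpi _ scale refl] := hD.
have := dpi _ _ _ _ _ (CPTP_trace N) rho_psd T_psd.
rewrite !kraus_traceE rho_tr T_tr -[X in D _ X]scalemx1.
rewrite (scale _ _ _ _ (psd1 1) (psd1 1) t_gt0).
by rewrite (refl _ _ density1) add0e /logb div1r lnV ?posrE // mulNr.
Qed.

End RelativeEntropy.

End QuantumOperations.

Unset Implicit Arguments.
Set Strict Implicit.

Theorem lemma9 (R : realType) (b : R) (hb0 : 0 < b) (hb1 : b != 1)
  (D : relent R) (second : bool) :
  is_rel_K_entropy b D ->
  (forall (dA dB : nat) (psi : 'cV[R[i]]_dA) (rhoB : 'M[R[i]]_dB),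
      adj psi *m psi = 1 -> density rhoB ->
      Hcond second D ((psi *m adj psi) *t rhoB) = 0%E) /\
  (forall (dA dB : nat) (rho : 'M[R[i]]_(dA * dB)),
      density rho -> (Hcond second D rho <= (logb b dA%:R)%:E)%E).
Proof.
move=> hD; split=> [dA dB psi rho psi_unit rho_dens | dA dB rho rho_dens].
- rewrite /Hcond; case: second.
  + apply/eqP; rewrite eq_le; apply/andP; split.
    * apply: ge_ereal_sup => _ [sigma sigma_dens <-].
      by rewrite leeNl oppe0 (relK_proj_tens_ge0 hD).
    * apply: ereal_sup_ubound; exists rho => //.
      by rewrite (relK_proj_tens_eq0 hD) // oppe0.
  + by rewrite ptraceA_tens mxtrace_proj // scale1r (relK_proj_tens_eq0 hD) // oppe0.
- have le_log sigma : density sigma ->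
      (- D _ rho (1%:M *t sigma) <= (logb b dA%:R)%:E)%E.
    case=> sigma_psd sigma_tr; rewrite leeNl; apply: (relK_ge_log_trace hD) => //.
    + exact: psd_tens1mx.
    + by rewrite mxtrace_tens mxtrace1 sigma_tr mulr1 rmorph_nat.
    + by rewrite ltr0n (density_dim_gt0 rho_dens).
  rewrite /Hcond; case: second.
  + by apply: ge_ereal_sup => _ [sigma sigma_dens <-]; apply: le_log.
  + case: rho_dens => rho_psd rho_tr.
    by apply: le_log; split; rewrite ?mxtrace_ptraceA //; apply: ptraceA_psd.
Qed.
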